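(* Let $\mathcal{C}$ be a Grothendieck site with enough points, let $G$ be a presheaf of groups on $\mathcal{C}$ with an involution $\theta\colon G\to G$, and let $B\subset G$ be a subgroup presheaf with $\theta(B)=B$. Let $B\times B$ act on $G$ by $(b_1,b_2)\cdot g=b_1gb_2^{-1}$, and let $\Gamma=\mathbb{Z}/2\mathbb{Z}$ act on the presheaf of groupoids $E_{B\times B}G$ by $\bar g=\theta(g^{-1})$ on objects and $\overline{(b_1,b_2)}=(\theta(b_2),\theta(b_1))$ on morphisms. Let $Z^1(\theta;G)$ be the presheaf of sets $Z^1(\theta;G)(U)=\{g\in G(U)\mid g\theta(g)=1\}$, with $B$ acting by twisted conjugation $b\cdot g=\theta(b)gb^{-1}$. Then there is a canonical acyclic sectionwise fibration \[(E_{B\times B}G)^{h\Gamma}\xrightarrow{\ \sim\ } E_BZ^1(\theta;G).\]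
   Context: A groupoid is a small category with all morphisms invertible. For a group $H$ acting on a set $S$, $\mathbb{E}_HS$ is the groupoid with object set $S$ and morphism set $H\times S$, where $(h,s)$ is an arrow $s\to h\cdot s$, composition given by multiplication in $H$. For a presheaf of groups $H$ acting on a presheaf of sets $S$, $E_HS$ is the presheaf of groupoids $U\mapsto\mathbb{E}_{H(U)}S(U)$. A map of groupoids is a weak equivalence if it is an equivalence of categories, and a fibration if for every object $x$ and isomorphism $\alpha\colon f(x)\to y$ there is an isomorphism $\beta\colon x\to x_1$ with $f(\beta)=\alpha$. A morphism of presheaves of groupoids is an acyclic sectionwise fibration if on each section $U$ it is both a fibration and a weak equivalence. For a groupoid $X$ with $\Gamma$-action (nontrivial element $x\mapsto\bar x$, acting on objects and morphisms compatibly with structure maps), $X^{h\Gamma}$ has objects $(x,\phi)$ with $\phi\in\mathrm{Hom}(x,\bar x)$, $\bar\phi=\phi^{-1}$, and arrows $(x,\phi)\to(x_1,\phi_1)$ the $\alpha\colon x\to x_1$ with $\phi_1\alpha=\bar\alpha\phi$; for presheaves, $X^{h\Gamma}(U)=X(U)^{h\Gamma}$. *)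

Record Cat := {
  Ob : Type;
  Hom : Ob -> Ob -> Type;
  cid : forall U, Hom U U;
  ccomp : forall U V W, Hom V W -> Hom U V -> Hom U W;   (* ccomp g f = g o f *)
  ccomp_id_l : forall U V (f : Hom U V), ccomp _ _ _ (cid V) f = f;
  ccomp_id_r : forall U V (f : Hom U V), ccomp _ _ _ f (cid U) = f;
  ccomp_assoc : forall U V W X (f : Hom U V) (g : Hom V W) (h : Hom W X),
      ccomp _ _ _ h (ccomp _ _ _ g f) = ccomp _ _ _ (ccomp _ _ _ h g) f }.
Arguments cid {_} U.
Arguments ccomp {_ U V W} _ _.

Record Group := {
  gcar :> Type;
  gmul : gcar -> gcar -> gcar;
  gone : gcar;
  ginv : gcar -> gcar;
  gmulA : forall x y z, gmul x (gmul y z) = gmul (gmul x y) z;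
  gmul1l : forall x, gmul gone x = x;
  gmul1r : forall x, gmul x gone = x;
  gmulVl : forall x, gmul (ginv x) x = gone;
  gmulVr : forall x, gmul x (ginv x) = gone }.
Arguments gmul {_} _ _.
Arguments gone {_}.
Arguments ginv {_} _.

Record PshGroup (C : Cat) := {
  pg : Ob C -> Group;
  pres : forall U V, Hom C V U -> pg U -> pg V;
  pres_mul : forall U V (f : Hom C V U) x y,
      pres U V f (gmul x y) = gmul (pres U V f x) (pres U V f y);
  pres_id : forall U x, pres U U (cid U) x = x;
  pres_comp : forall U V W (f : Hom C V U) (g : Hom C W V) x,
      pres U W (ccomp f g) x = pres V W g (pres U V f x) }.
Arguments pg {_} _ _.
Arguments pres {_} _ {U V} _ _.

Definition is_involution {C : Cat} (G : PshGroup C)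
    (theta : forall U, pg G U -> pg G U) : Prop :=
  (forall U x y, theta U (gmul x y) = gmul (theta U x) (theta U y)) /\
  (forall U V (f : Hom C V U) x, pres G f (theta U x) = theta V (pres G f x)) /\
  (forall U x, theta U (theta U x) = x).

Definition is_subgroup_presheaf {C : Cat} (G : PshGroup C)
    (B : forall U, pg G U -> Prop) : Prop :=
  (forall U, B U gone) /\
  (forall U x y, B U x -> B U y -> B U (gmul x y)) /\
  (forall U x, B U x -> B U (ginv x)) /\
  (forall U V (f : Hom C V U) x, B U x -> B V (pres G f x)).

(* A groupoid is presented by raw types of objects and arrows together with
   predicates singling out the actual objects/arrows (this avoids dependent
   hom-types); gcomp g f = g o f is meaningful when tgt f = src g. *)
Record Grpd := {
  ob : Type;
  isob : ob -> Prop;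
  mor : Type;
  ismor : mor -> Prop;
  src : mor -> ob;
  tgt : mor -> ob;
  idm : ob -> mor;
  gcomp : mor -> mor -> mor;
  minv : mor -> mor }.
Arguments isob {_} _.
Arguments ismor {_} _.
Arguments src {_} _.
Arguments tgt {_} _.
Arguments idm {_} _.
Arguments gcomp {_} _ _.
Arguments minv {_} _.

Record Functor (X Y : Grpd) := {
  fo : ob X -> ob Y;
  fm : mor X -> mor Y }.
Arguments fo {_ _} _ _.
Arguments fm {_ _} _ _.

Definition is_functor {X Y : Grpd} (F : Functor X Y) : Prop :=
  (forall x, isob x -> isob (fo F x)) /\
  (forall a, ismor a -> ismor (fm F a)) /\
  (forall a, ismor a -> src (fm F a) = fo F (src a) /\ tgt (fm F a) = fo F (tgt a)) /\
  (forall x, isob x -> fm F (idm x) = idm (fo F x)) /\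
  (forall a b, ismor a -> ismor b -> tgt a = src b ->
     fm F (gcomp b a) = gcomp (fm F b) (fm F a)).

Definition is_fibration {X Y : Grpd} (F : Functor X Y) : Prop :=
  forall (x : ob X) (a : mor Y), isob x -> ismor a -> src a = fo F x ->
    exists b : mor X, ismor b /\ src b = x /\ fm F b = a.

(* weak equivalence: equivalence of categories (quasi-inverse functor together
   with natural isomorphisms; in a groupoid every natural transformation is a
   natural isomorphism) *)
Definition is_weak_equivalence {X Y : Grpd} (F : Functor X Y) : Prop :=
  exists H : Functor Y X, is_functor H /\
  (exists eta : ob X -> mor X,
     (forall x, isob x -> ismor (eta x) /\ src (eta x) = x /\
                          tgt (eta x) = fo H (fo F x)) /\
     (forall a, ismor a ->
        gcomp (eta (tgt a)) a = gcomp (fm H (fm F a)) (eta (src a)))) /\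
  (exists eps : ob Y -> mor Y,
     (forall y, isob y -> ismor (eps y) /\ src (eps y) = fo F (fo H y) /\
                          tgt (eps y) = y) /\
     (forall b, ismor b ->
        gcomp (eps (tgt b)) (fm F (fm H b)) = gcomp b (eps (src b)))).

Record PshGrpd (C : Cat) := {
  pX : Ob C -> Grpd;
  prob : forall U V, Hom C V U -> ob (pX U) -> ob (pX V);
  prmor : forall U V, Hom C V U -> mor (pX U) -> mor (pX V) }.
Arguments pX {_} _ _.
Arguments prob {_} _ {U V} _ _.
Arguments prmor {_} _ {U V} _ _.

Definition is_psh_morphism {C : Cat} (X Y : PshGrpd C)
    (F : forall U, Functor (pX X U) (pX Y U)) : Prop :=
  (forall U, is_functor (F U)) /\
  (forall U V (f : Hom C V U) x, isob x ->
     fo (F V) (prob X f x) = prob Y f (fo (F U) x)) /\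
  (forall U V (f : Hom C V U) a, ismor a ->
     fm (F V) (prmor X f a) = prmor Y f (fm (F U) a)).

Definition is_acyclic_sectionwise_fibration {C : Cat} (X Y : PshGrpd C)
    (F : forall U, Functor (pX X U) (pX Y U)) : Prop :=
  is_psh_morphism X Y F /\
  (forall U, is_fibration (F U) /\ is_weak_equivalence (F U)).

(* H : group given as a subset memH of a group type (with its operations),
   S : set given as a subset memS, act : action.
   Objects s in S; arrows (h,s) : s -> h.s; (h',h.s) o (h,s) = (h'h, s). *)
Definition actGrpd (H : Type) (memH : H -> Prop) (mulH : H -> H -> H)
    (oneH : H) (invH : H -> H) (S : Type) (memS : S -> Prop)
    (act : H -> S -> S) : Grpd := {|
  ob := S;
  isob := memS;
  mor := (H * S)%type;
  ismor := fun m => memH (fst m) /\ memS (snd m);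
  src := fun m => snd m;
  tgt := fun m => act (fst m) (snd m);
  idm := fun s => (oneH, s);
  gcomp := fun g f => (mulH (fst g) (fst f), snd f);
  minv := fun f => (invH (fst f), act (fst f) (snd f)) |}.

(* bo, bm : the action of the nontrivial element of Gamma = Z/2 *)
Definition hfix (X : Grpd) (bo : ob X -> ob X) (bm : mor X -> mor X) : Grpd := {|
  ob := (ob X * mor X)%type;
  isob := fun p => isob (fst p) /\ ismor (snd p) /\ src (snd p) = fst p /\
                   tgt (snd p) = bo (fst p) /\ bm (snd p) = minv (snd p);
  mor := ((ob X * mor X) * (ob X * mor X) * mor X)%type;
  ismor := fun t =>
     let p := fst (fst t) in let p1 := snd (fst t) in let a := snd t in
     (isob (fst p) /\ ismor (snd p) /\ src (snd p) = fst p /\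
        tgt (snd p) = bo (fst p) /\ bm (snd p) = minv (snd p)) /\
     (isob (fst p1) /\ ismor (snd p1) /\ src (snd p1) = fst p1 /\
        tgt (snd p1) = bo (fst p1) /\ bm (snd p1) = minv (snd p1)) /\
     ismor a /\ src a = fst p /\ tgt a = fst p1 /\
     gcomp (snd p1) a = gcomp (bm a) (snd p);
  src := fun t => fst (fst t);
  tgt := fun t => snd (fst t);
  idm := fun p => (p, p, idm (fst p));
  gcomp := fun t2 t1 => (fst (fst t1), snd (fst t2), gcomp (snd t2) (snd t1));
  minv := fun t => (snd (fst t), fst (fst t), minv (snd t)) |}.

Definition hfixPsh {C : Cat} (X : PshGrpd C)
    (bo : forall U, ob (pX X U) -> ob (pX X U))
    (bm : forall U, mor (pX X U) -> mor (pX X U)) : PshGrpd C := {|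
  pX := fun U => hfix (pX X U) (bo U) (bm U);
  prob := fun U V f p => (prob X f (fst p), prmor X f (snd p));
  prmor := fun U V f t =>
     ((prob X f (fst (fst (fst t))), prmor X f (snd (fst (fst t)))),
      (prob X f (fst (snd (fst t))), prmor X f (snd (snd (fst t)))),
      prmor X f (snd t)) |}.

Section Specific.
Context {C : Cat} (G : PshGroup C) (theta : forall U, pg G U -> pg G U)
        (B : forall U, pg G U -> Prop).

Definition EBBG : PshGrpd C := {|
  pX := fun U => actGrpd (pg G U * pg G U)
         (fun h => B U (fst h) /\ B U (snd h))
         (fun h k => (gmul (fst h) (fst k), gmul (snd h) (snd k)))
         (gone, gone)
         (fun h => (ginv (fst h), ginv (snd h)))
         (pg G U) (fun _ => True)
         (fun h g => gmul (gmul (fst h) g) (ginv (snd h)));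
  prob := fun U V f g => pres G f g;
  prmor := fun U V f m =>
     ((pres G f (fst (fst m)), pres G f (snd (fst m))), pres G f (snd m)) |}.

Definition barOb (U : Ob C) (g : ob (pX EBBG U)) : ob (pX EBBG U) :=
  theta U (ginv (g : pg G U)).
Definition barMor (U : Ob C) (m : mor (pX EBBG U)) : mor (pX EBBG U) :=
  ((theta U (snd (fst m)), theta U (fst (fst m))), barOb U (snd m)).

Definition EBZ : PshGrpd C := {|
  pX := fun U => actGrpd (pg G U) (B U) gmul gone ginv
         (pg G U) (fun g => gmul g (theta U g) = gone)
         (fun b g => gmul (gmul (theta U b) g) (ginv b));
  prob := fun U V f g => pres G f g;
  prmor := fun U V f m => (pres G f (fst m), pres G f (snd m)) |}.

Definition hEBBG : PshGrpd C := hfixPsh EBBG barOb barMor.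

(* The canonical map: (g, phi=(b1,b2)) |-> b1 g ;
   an arrow alpha = (c1,c2) : (g,phi) -> (g1,phi1) |-> (c2, b1 g). *)
Definition canonMap (U : Ob C) : Functor (pX hEBBG U) (pX EBZ U) := {|
  fo := fun p : ob (pX hEBBG U) => gmul (fst (fst (snd p))) (fst p) : ob (pX EBZ U);
  fm := fun t : mor (pX hEBBG U) =>
     ((snd (fst (snd t)),
       gmul (fst (fst (snd (fst (fst t))))) (fst (fst (fst t)))) : mor (pX EBZ U)) |}.

End Specific.


(* A homotopy fixed point of E_{BxB}G is an element g with an arrow (b1, b2) : g -> θ(g⁻¹)
   whose conjugate is its inverse, i.e. b1 g b2⁻¹ = θ(g⁻¹) and θ(b1) = b2⁻¹; then b1 g is a
   θ-cocycle.  An arrow (c1, c2) between two fixed points with first components b1, b1' must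
   satisfy b1' c1 = θ(c2) b1, so it is determined by c2, which is an arrow of E_B Z¹ between
   the images.  The quasi-inverse sends a cocycle h to the fixed point (h, (1, 1)), the unit
   at (g, (b1, b2)) is the arrow (b1, 1), and an arrow c out of b1 g lifts to (1, c).
   Everything happens in one section at a time; naturality in U only uses that restriction
   maps are homomorphisms. *)

Section GroupFacts.
Variable K : Group.
Implicit Types x y : K.

Lemma mulKg x y : gmul (ginv x) (gmul x y) = y.
Proof. rewrite gmulA, gmulVl, gmul1l; reflexivity. Qed.

Lemma mulKVg x y : gmul x (gmul (ginv x) y) = y.
Proof. rewrite gmulA, gmulVr, gmul1l; reflexivity. Qed.

Lemma ginv_unique x y : gmul x y = gone -> ginv x = y.
Proof. intro Hxy. rewrite <- (gmul1r _ (ginv x)), <- Hxy, mulKg. reflexivity. Qed.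

Lemma ginv1 : ginv (@gone K) = gone.
Proof. apply ginv_unique, gmul1l. Qed.

Lemma ginvK x : ginv (ginv x) = x.
Proof. apply ginv_unique, gmulVl. Qed.

Lemma ginvM x y : ginv (gmul x y) = gmul (ginv y) (ginv x).
Proof.
  apply ginv_unique.
  rewrite <- gmulA, (gmulA _ y), gmulVr, gmul1l, gmulVr. reflexivity.
Qed.

End GroupFacts.

Section Sectionwise.
Variables (K : Group) (theta : K -> K) (B : K -> Prop).
Hypothesis thetaM : forall x y, theta (gmul x y) = gmul (theta x) (theta y).
Hypothesis thetaK : forall x, theta (theta x) = x.
Hypothesis B1 : B gone.
Hypothesis BM : forall x y, B x -> B y -> B (gmul x y).
Hypothesis BV : forall x, B x -> B (ginv x).
Hypothesis Btheta : forall x, B x -> B (theta x).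

Lemma theta1 : theta gone = gone.
Proof.
  assert (Hsq := thetaM gone gone). rewrite gmul1l in Hsq.
  rewrite <- (mulKg _ (theta gone) (theta gone)), <- Hsq, gmulVl. reflexivity.
Qed.

Lemma thetaV x : theta (ginv x) = ginv (theta x).
Proof. symmetry; apply ginv_unique. rewrite <- thetaM, gmulVr. apply theta1. Qed.

Lemma theta_eq_ginv_sym b1 b2 : theta b1 = ginv b2 -> theta b2 = ginv b1.
Proof. intro E. rewrite <- (ginvK _ b2), <- E, thetaV, thetaK. reflexivity. Qed.

Ltac group_simpl :=
  repeat rewrite ?ginvM, ?ginvK, ?ginv1, ?thetaM, ?thetaV, ?theta1, ?thetaK,
    ?gmul1l, ?gmul1r, <- ?gmulA, ?mulKg, ?mulKVg, ?gmulVr, ?gmulVl.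

Definition cocycle (g : K) : Prop := gmul g (theta g) = gone.

Lemma cocycle_theta g : cocycle g -> theta g = ginv g.
Proof. intro Hg. symmetry; apply ginv_unique; exact Hg. Qed.

Lemma cocycle_act c h : cocycle h -> cocycle (gmul (gmul (theta c) h) (ginv c)).
Proof.
  intro Hh. unfold cocycle. group_simpl.
  rewrite (cocycle_theta h Hh). group_simpl. reflexivity.
Qed.

(* The sections at U of EBBG, hEBBG, EBZ and canonMap are, up to conversion, the following
   constructions for the group G(U). *)
Definition EBB : Grpd :=
  actGrpd (K * K) (fun h => B (fst h) /\ B (snd h))
    (fun h k => (gmul (fst h) (fst k), gmul (snd h) (snd k))) (gone, gone)
    (fun h => (ginv (fst h), ginv (snd h))) K (fun _ => True)
    (fun h g => gmul (gmul (fst h) g) (ginv (snd h))).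

Definition bar_ob (g : K) : K := theta (ginv g).

Definition bar_mor (m : (K * K) * K) : (K * K) * K :=
  ((theta (snd (fst m)), theta (fst (fst m))), bar_ob (snd m)).

Definition hEBB : Grpd := hfix EBB bar_ob bar_mor.

Definition EZ1 : Grpd :=
  actGrpd K B gmul gone ginv K cocycle (fun b g => gmul (gmul (theta b) g) (ginv b)).

Definition canon : Functor hEBB EZ1 := {|
  fo := fun p : ob hEBB => gmul (fst (fst (snd p))) (fst p) : ob EZ1;
  fm := fun t : mor hEBB =>
    (snd (fst (snd t)), gmul (fst (fst (snd (fst (fst t))))) (fst (fst (fst t))))
    : mor EZ1 |}.

Definition hfixed (g b1 b2 : K) : Prop :=
  B b1 /\ B b2 /\ gmul (gmul b1 g) (ginv b2) = bar_ob g /\ theta b1 = ginv b2.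

Lemma hEBB_obP g b1 b2 s :
  @isob hEBB (g, ((b1, b2), s)) <-> s = g /\ hfixed g b1 b2.
Proof.
  unfold hfixed; cbn; split.
  - intros (_ & [[Hb1 Hb2] _] & -> & Htgt & Ebar).
    injection Ebar as _ Eb1 _. auto.
  - intros (-> & Hb1 & Hb2 & Htgt & Eb1).
    rewrite Htgt. unfold bar_mor, bar_ob; cbn.
    rewrite Eb1, (theta_eq_ginv_sym b1 b2 Eb1). repeat split; auto.
Qed.

Lemma hfixed_cocycle g b1 b2 : hfixed g b1 b2 -> cocycle (gmul b1 g).
Proof.
  intros (_ & _ & Htgt & Eb1). unfold cocycle, bar_ob in *.
  rewrite thetaM, Eb1, gmulA, Htgt, <- thetaM, gmulVl. apply theta1.
Qed.

Lemma hEBB_morP g b1 b2 s0 g1 b1' b2' s1 c1 c2 s :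
  @ismor hEBB (((g, ((b1, b2), s0)), (g1, ((b1', b2'), s1))), ((c1, c2), s)) <->
  @isob hEBB (g, ((b1, b2), s0)) /\ @isob hEBB (g1, ((b1', b2'), s1)) /\
  B c1 /\ B c2 /\ s = g /\ gmul (gmul c1 g) (ginv c2) = g1 /\
  gmul b1' c1 = gmul (theta c2) b1.
Proof.
  cbn -[isob]. split.
  - intros (Hp & Hp1 & [[Hc1 Hc2] _] & -> & Htgt & Etw).
    injection Etw as Etw _ _. auto 7.
  - intros (Hp & Hp1 & Hc1 & Hc2 & -> & Htgt & Etw).
    assert (Hp' := Hp). assert (Hp1' := Hp1).
    apply hEBB_obP in Hp' as (-> & _ & _ & _ & Eb1).
    apply hEBB_obP in Hp1' as (-> & _ & _ & _ & Eb1').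
    split; [exact Hp |]. split; [exact Hp1 |].
    repeat split; auto.
    assert (Eb2 : b2 = ginv (theta b1)) by (rewrite Eb1, ginvK; reflexivity).
    assert (Eb2' : b2' = ginv (theta b1')) by (rewrite Eb1', ginvK; reflexivity).
    assert (Eb1'' : b1' = gmul (gmul (theta c2) b1) (ginv c1))
      by (rewrite <- Etw; group_simpl; reflexivity).
    cbn; unfold bar_ob; rewrite Etw, Eb2, Eb2', Eb1''. group_simpl. reflexivity.
Qed.

Lemma twist_tgt b1 b1' c1 c2 g :
  gmul b1' c1 = gmul (theta c2) b1 ->
  gmul b1' (gmul (gmul c1 g) (ginv c2)) = gmul (gmul (theta c2) (gmul b1 g)) (ginv c2).
Proof. intro Etw. rewrite !gmulA, Etw. reflexivity. Qed.

Lemma canon_isob p : isob p -> isob (fo canon p).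
Proof.
  destruct p as [g [[b1 b2] s]]. intro Hp.
  apply hEBB_obP in Hp as [_ Hfix]. exact (hfixed_cocycle g b1 b2 Hfix).
Qed.

Lemma canon_functor : is_functor canon.
Proof.
  split; [exact canon_isob | split; [| split; [| split]]].
  - intros [[[g [[b1 b2] s0]] [g1 [[b1' b2'] s1]]] [[c1 c2] s]] Ht.
    apply hEBB_morP in Ht as (Hp & _ & _ & Hc2 & _).
    split; [exact Hc2 | exact (canon_isob _ Hp)].
  - intros [[[g [[b1 b2] s0]] [g1 [[b1' b2'] s1]]] [[c1 c2] s]] Ht.
    apply hEBB_morP in Ht as (_ & _ & _ & _ & _ & Htgt & Etw).
    split; [reflexivity |]. cbn. rewrite <- Htgt. symmetry; exact (twist_tgt _ _ _ _ _ Etw).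
  - reflexivity.
  - reflexivity.
Qed.

Lemma canon_fibration : is_fibration canon.
Proof.
  intros [g [[b1 b2] s]] [c h] Hp [Hc _] Hsrc. cbn in Hsrc; subst h.
  assert (Hp' := Hp). apply hEBB_obP in Hp' as (-> & Hb1 & Hb2 & Htgt & Eb1).
  exists (((g, ((b1, b2), g)),
           (gmul g (ginv c), ((gmul (theta c) b1, gmul b2 (ginv c)), gmul g (ginv c)))),
          ((gone, c), g)).
  split; [| split; reflexivity].
  apply hEBB_morP. split; [exact Hp |]. split.
  - apply hEBB_obP. unfold hfixed, bar_ob in *. repeat split; auto.
    + group_simpl. rewrite <- thetaV, <- Htgt. group_simpl. reflexivity.
    + rewrite thetaM, thetaK, Eb1. group_simpl. reflexivity.
  - repeat split; auto; group_simpl; reflexivity.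
Qed.

Definition hfix_of_cocycle (h : ob EZ1) : ob hEBB := (h, ((@gone K, @gone K), h)).

Definition hfix_mor_of_cocycle (a : mor EZ1) : mor hEBB :=
  ((hfix_of_cocycle (snd a),
    hfix_of_cocycle (gmul (gmul (theta (fst a)) (snd a)) (ginv (fst a)))),
   ((theta (fst a), fst a), snd a)).

Definition canon_inv : Functor EZ1 hEBB := {|
  fo := hfix_of_cocycle;
  fm := hfix_mor_of_cocycle |}.

Lemma hfix_of_cocycle_isob h : cocycle h -> @isob hEBB (hfix_of_cocycle h).
Proof.
  intro Hh. apply hEBB_obP. unfold hfixed, bar_ob.
  rewrite thetaV, (cocycle_theta h Hh). group_simpl. repeat split; auto.
Qed.

Lemma canon_inv_functor : is_functor canon_inv.
Proof.
  split; [exact hfix_of_cocycle_isob | split; [| split; [| split]]].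
  - intros [c h] [Hc Hh]; cbn in Hc, Hh.
    change (@ismor hEBB (hfix_mor_of_cocycle (c, h))).
    unfold hfix_mor_of_cocycle, hfix_of_cocycle; cbn [fst snd].
    apply hEBB_morP. split; [exact (hfix_of_cocycle_isob h Hh) |].
    split; [exact (hfix_of_cocycle_isob _ (cocycle_act c h Hh)) |].
    repeat split; auto. group_simpl. reflexivity.
  - split; reflexivity.
  - intros h _. cbn; unfold hfix_mor_of_cocycle; cbn. group_simpl. reflexivity.
  - intros [c h] [d h'] _ _ Hsrc. cbn in *; subst h'.
    unfold hfix_mor_of_cocycle; cbn. group_simpl. reflexivity.
Qed.

Lemma canon_weak_equivalence : is_weak_equivalence canon.
Proof.
  exists canon_inv. split; [exact canon_inv_functor | split].
  - exists (fun p : ob hEBB =>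
      ((p, hfix_of_cocycle (gmul (fst (fst (snd p))) (fst p))),
       ((fst (fst (snd p)), gone), fst p)) : mor hEBB).
    split.
    + intros [g [[b1 b2] s]] Hp.
      assert (Hp' := Hp). apply hEBB_obP in Hp' as (-> & Hfix).
      split; [| split; reflexivity].
      apply hEBB_morP. split; [exact Hp |].
      split; [exact (hfix_of_cocycle_isob _ (hfixed_cocycle g b1 b2 Hfix)) |].
      destruct Hfix as (Hb1 & _).
      repeat split; auto; group_simpl; reflexivity.
    + intros [[[g [[b1 b2] s0]] [g1 [[b1' b2'] s1]]] [[c1 c2] s]] Ht.
      apply hEBB_morP in Ht as (_ & _ & _ & _ & -> & Htgt & Etw).
      unfold hfix_mor_of_cocycle; cbn.
      rewrite <- Htgt, (twist_tgt _ _ _ _ _ Etw), Etw, gmul1l, gmul1r. reflexivity.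
  - exists (fun h : K => (gone, gmul gone h) : mor EZ1).
    split.
    + intros h Hh; cbn. group_simpl. repeat split; auto.
    + intros [c h] _; cbn. group_simpl. reflexivity.
Qed.

Lemma canon_sectionwise :
  is_functor canon /\ is_fibration canon /\ is_weak_equivalence canon.
Proof. auto using canon_functor, canon_fibration, canon_weak_equivalence. Qed.

End Sectionwise.

Theorem mainTheorem10 (C : Cat) (G : PshGroup C)
    (theta : forall U, pg G U -> pg G U) (B : forall U, pg G U -> Prop)
    (Htheta : is_involution G theta)
    (HB : is_subgroup_presheaf G B)
    (HthetaB : forall U y, B U y <-> exists x, B U x /\ theta U x = y) :
  is_acyclic_sectionwise_fibration (hEBBG G theta B) (EBZ G theta B)
    (canonMap G theta B).
Proof.
  destruct Htheta as (thetaM & _ & thetaK).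
  destruct HB as (B1 & BM & BV & _).
  assert (Btheta : forall U x, B U x -> B U (theta U x))
    by (intros U x Hx; apply HthetaB; eauto).
  assert (Hsec : forall U, is_functor (canonMap G theta B U) /\
                   is_fibration (canonMap G theta B U) /\
                   is_weak_equivalence (canonMap G theta B U))
    by (intro U; exact (canon_sectionwise (pg G U) (theta U) (B U)
                          (thetaM U) (thetaK U) (B1 U) (BM U) (BV U) (Btheta U))).
  split; [split; [| split] | intro U; split; apply Hsec].
  - intro U; apply Hsec.
  - intros U V f [g [[b1 b2] s]] _; cbn. symmetry; apply pres_mul.
  - intros U V f [[[g [[b1 b2] s]] p1] [[c1 c2] s']] _; cbn.
    f_equal; symmetry; apply pres_mul.
Qed.
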